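(* Let $\ell\ge2$ and let $\lambda$ be an $\ell$-core. Then the $n$-vector $(b_0,\ldots,b_{\ell-1})$ of $\lambda$ equals $\pi_\ell^{-1}(\lambda)$.
   Context: Partitions are in English notation; box $(x,y)$ is in row $x$, column $y$. Hook length of a box: boxes weakly to its right in its row plus boxes strictly below it in its column; an $\ell$-core has no hook length divisible by $\ell$. $n$-vector: set $\lambda_p=0$ for $p$ larger than the number of nonzero parts. For $p\ge1$ let $r_p=\lfloor(\lambda_p-p)/\ell\rfloor+1$ (the region of the box $(p,\lambda_p)$, where region $r$ consists of boxes $(x,y)$ with $(r-1)\ell\le y-x<r\ell$). For $0\le j\le\ell-1$, $b_j=\max\{r_p: p\ge1,\ \lambda_p-p\equiv j\pmod\ell\}$. For $\mathbf{b}=(b_0,\ldots,b_{\ell-1})\in\mathbf{Z}^\ell$ with $\sum b_j=0$, let $X(\mathbf{b})=\{r\ell+j:0\le j\le\ell-1,\ r\in\mathbf{Z},\ r\le b_j\}$ and let $\pi_\ell(\mathbf{b})$ be the partition whose nonzero parts are the positive values of $\#\{y\in\mathbf{Z}\setminus X(\mathbf{b}):y<x\}$, $x\in X(\mathbf{b})$. It is known that $\pi_\ell$ is a bijection from $\{\mathbf{b}\in\mathbf{Z}^\ell:\sum b_j=0\}$ onto the set of $\ell$-cores. *)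

From mathcomp Require Import all_boot all_order all_algebra.
Set Implicit Arguments. Unset Strict Implicit. Unset Printing Implicit Defensive.
Import Order.TTheory GRing.Theory Num.Theory.
Local Open Scope ring_scope.

Definition is_partition (la : seq nat) : Prop :=
  sorted geq la /\ all (fun k => 0 < k)%N la.

(* lambda_p for p >= 1 (1-indexed rows), 0 beyond the number of nonzero parts *)
Definition part (la : seq nat) (p : nat) : nat := nth 0%N la p.-1.

(* hook length of box (x,y), 1 <= x, 1 <= y <= lambda_x :
   boxes weakly right of it in its row, plus boxes strictly below it in its column *)
Definition hook (la : seq nat) (x y : nat) : nat :=
  ((part la x - y).+1 + count (fun x' => (x < x')%N && (y <= part la x')%N)
                              (iota 1 (size la)))%N.

Definition is_box (la : seq nat) (x y : nat) : bool :=
  [&& (1 <= x)%N, (x <= size la)%N, (1 <= y)%N & (y <= part la x)%N].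

Definition is_core (l : nat) (la : seq nat) : Prop :=
  forall x y, is_box la x y -> ~~ (l %| hook la x y)%N.

(* content lambda_p - p of the last box (p, lambda_p) of row p *)
Definition content (la : seq nat) (p : nat) : int := (part la p)%:Z - p%:Z.

Definition region (l : nat) (la : seq nat) (p : nat) : int :=
  ((content la p) %/ l%:Z)%Z + 1.

Definition is_nvector (l : nat) (la : seq nat) (b : nat -> int) : Prop :=
  forall j, (j < l)%N ->
    (exists p, (0 < p)%N /\ ((content la p) %% l%:Z)%Z = j%:Z /\ region l la p = b j)
    /\ (forall p, (0 < p)%N -> ((content la p) %% l%:Z)%Z = j%:Z -> region l la p <= b j).

(* X(b) = { r*ell + j : 0 <= j <= ell-1, r <= b_j }; since x = (x div ell)*ell + (x mod ell)
   uniquely, membership is the following test. *)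
Definition inX (l : nat) (b : nat -> int) (x : int) : bool :=
  ((x %/ l%:Z)%Z <= b `|(x %% l%:Z)%Z|%N).

Definition minb (l : nat) (b : nat -> int) : int :=
  foldr Num.min (b 0%N) [seq b j | j <- iota 0 l].
Definition maxb (l : nat) (b : nat -> int) : int :=
  foldr Num.max (b 0%N) [seq b j | j <- iota 0 l].

(* Lower window bound L = ell * min_j b_j: every integer y < L lies in X(b). *)
Definition lowX (l : nat) (b : nat -> int) : int := l%:Z * minb l b.
(* Upper window bound U = ell * (max_j b_j + 1): no integer x >= U lies in X(b). *)
Definition highX (l : nat) (b : nat -> int) : int := l%:Z * (maxb l b + 1).

(* #{ y in Z \ X(b) : y < x }  (all y < lowX are in X(b), so only [lowX, x) counts) *)
Definition gapcount (l : nat) (b : nat -> int) (x : int) : nat :=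
  if lowX l b <= x then
    count (fun i : nat => ~~ inX l b (lowX l b + i%:Z)) (iota 0 `|x - lowX l b|%N)
  else 0%N.

(* pi_ell(b): the partition whose nonzero parts are the positive values of gapcount
   on X(b) (only x in [lowX, highX) can be in X(b) with a positive value). *)
Definition pi_l (l : nat) (b : nat -> int) : seq nat :=
  sort geq [seq gapcount l b x |
             x <- [seq lowX l b + i%:Z | i <- iota 0 `|highX l b - lowX l b|%N]
           & inX l b x && (0 < gapcount l b x)%N].

From mathcomp Require Import all_boot all_order all_algebra zify.
Import Order.TTheory GRing.Theory Num.Theory.
Local Open Scope ring_scope.
Set Implicit Arguments. Unset Strict Implicit.

(* Write S for the beta-set {lambda_p - p : p >= 1} of lambda.  Then lambda_p is the number
   of integers below lambda_p - p that are not in S, and S - l is contained in S when lambda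
   is an l-core: otherwise, with t = lambda_p - p - l not in S and q the first row after p
   whose content drops below t, the box (p, t + q) has hook length exactly l.  Hence each
   residue class of S modulo l is a downward-closed ray whose top element lies in region
   b_j, so X(b) = S + l and pi_l(b) = lambda.  Counting S in a window [a l, c l) once as a
   whole and once class by class, where class j contributes b_j - a elements, gives
   sum_j b_j = 0. *)

Lemma count_eq_size_mem (T : eqType) (P : pred T) (s r : seq T) :
  uniq s -> uniq r -> (forall x, (x \in s) && P x = (x \in r)) -> count P s = size r.
Proof.
move=> s_uniq r_uniq sPr; rewrite -size_filter; apply/perm_size/uniq_perm.
- by rewrite filter_uniq.
- exact: r_uniq.
by move=> x; rewrite mem_filter andbC sPr.
Qed.

Section FoldExtrema.
Variable R : realDomainType.
Implicit Types (d x : R) (s : seq R).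

Lemma foldr_max_mem d s : foldr Num.max d s \in d :: s.
Proof.
elim: s => [|y s IH] /=; first exact: mem_head.
rewrite maxElt; case: ifP => _; last by rewrite !inE eqxx orbT.
by move: IH; rewrite !inE => /orP[->|->]; rewrite ?orbT.
Qed.

Lemma foldr_max_ge d s x : x \in d :: s -> x <= foldr Num.max d s.
Proof.
elim: s => [|y s IH] /=; first by rewrite inE => /eqP->.
rewrite !inE le_max => /or3P[xd|/eqP->|xs]; first by rewrite IH ?inE ?xd ?orbT.
  by rewrite lexx.
by rewrite IH ?inE ?xs ?orbT.
Qed.

Lemma foldr_min_le d s x : x \in d :: s -> foldr Num.min d s <= x.
Proof.
elim: s => [|y s IH] /=; first by rewrite inE => /eqP->.
rewrite !inE ge_min => /or3P[xd|/eqP->|xs]; first by rewrite IH ?inE ?xd ?orbT.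
  by rewrite lexx.
by rewrite IH ?inE ?xs ?orbT.
Qed.

End FoldExtrema.

Lemma modz_absz (l : nat) (x : int) : (0 < l)%N ->
  `|(x %% l%:Z)%Z|%N%:Z = (x %% l%:Z)%Z /\ (`|(x %% l%:Z)%Z| < l)%N.
Proof.
move=> l0; have := modz_ge0 x (_ : l%:Z != 0); have := ltz_pmod x (_ : 0 < l%:Z); lia.
Qed.

Lemma eqz_mod_le (l : nat) (z w : int) : (0 < l)%N ->
  (z %% l%:Z)%Z = (w %% l%:Z)%Z -> z < w + l%:Z -> z <= w.
Proof.
move=> l0 zw zlt; set q := (z %/ l%:Z)%Z - (w %/ l%:Z)%Z.
have zwE : z - w = q * l%:Z by rewrite /q; have := divz_eq z l%:Z; have := divz_eq w l%:Z; lia.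
have : q * l%:Z < 1 * l%:Z by lia.
by rewrite ltr_pM2r ?ltz_nat // => q_lt1; nia.
Qed.

Lemma lez_eqmod_div (l : nat) (z w : int) : (0 < l)%N ->
  (z %% l%:Z)%Z = (w %% l%:Z)%Z -> (z <= w) = (z %/ l%:Z <= w %/ l%:Z)%Z.
Proof.
move=> l0 zw; apply/idP/idP => [|zwq]; first exact: lez_pdiv2r.
have := divz_eq z l%:Z; have := divz_eq w l%:Z; rewrite zw; nia.
Qed.

Definition window (A : int) (k : nat) : seq int := [seq A + i%:Z | i <- iota 0 k].

Lemma mem_window A k x : (x \in window A k) = (A <= x < A + k%:Z).
Proof.
apply/mapP/idP => [[i]|xA]; first by rewrite mem_iota => ? ->; lia.
by exists (absz (x - A)%R); rewrite ?mem_iota; lia.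
Qed.

Lemma window_uniq A k : uniq (window A k).
Proof. by rewrite map_inj_uniq ?iota_uniq // => i j; lia. Qed.

Definition count_range (P : pred int) (A x : int) : nat := count P (window A (absz (x - A)%R)).

Lemma count_range_split P A B x :
  A <= B -> B <= x -> count_range P A x = (count_range P A B + count_range P B x)%N.
Proof.
move=> AB Bx; rewrite /count_range /window.
have -> : absz (x - A)%R = (absz (B - A)%R + absz (x - B)%R)%N by lia.
rewrite iotaD map_cat count_cat add0n; congr (_ + count _ _)%N.
by rewrite -[X in iota X]addn0 iotaDl -map_comp; apply: eq_map => i /=; lia.
Qed.

Lemma count_range_eq0 P A x :
  A <= x -> (forall y, A <= y < x -> ~~ P y) -> count_range P A x = 0%N.
Proof.
move=> Ax notP; rewrite /count_range (eq_in_count (a2 := pred0)) ?count_pred0 // => y.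
by rewrite mem_window => yAx; apply/negbTE/notP; lia.
Qed.

Lemma count_range_shift P A x c :
  count_range P A x = count_range (fun y => P (y + c)) (A - c) (x - c).
Proof.
rewrite /count_range /window !count_map.
have -> : absz (x - c - (A - c))%R = absz (x - A)%R by lia.
by apply: eq_count => i /=; congr (P _); lia.
Qed.

Lemma count_range_all (P : pred int) A x :
  A <= x -> (forall y, A <= y < x -> P y) -> count_range P A x = absz (x - A)%R.
Proof.
move=> Ax allP; rewrite /count_range (eq_in_count (a2 := predT)) ?count_predT ?size_map ?size_iota //.
by move=> y; rewrite mem_window => yAx; apply: allP; lia.
Qed.

Lemma count_by_residue (l : nat) (P : pred int) (s : seq int) : (0 < l)%N ->
  count P s = (\sum_(j < l) count (fun z => P z && ((z %% l%:Z)%Z == j%:Z)) s)%N.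
Proof.
move=> l0; elim: s => [|x s IH] /=; first by rewrite big1.
rewrite big_split /= -IH; congr (_ + _)%N; case: (P x) => /=; last by rewrite big1.
have [rE rl] := modz_absz x l0.
rewrite (bigD1 (Ordinal rl)) //= rE eqxx big1 // => j /eqP jr.
by apply/eqP; rewrite eqb0; apply/eqP => xj; apply: jr; apply: val_inj => /=; lia.
Qed.

Lemma count_residue_range (l j : nat) (a b : int) : (j < l)%N -> a <= b ->
  count_range (fun z => (z %% l%:Z)%Z == j%:Z) (a * l%:Z) (b * l%:Z) = absz (b - a)%R.
Proof.
move=> jl ab; have l0 : 0 < l%:Z by lia.
pose r := [seq (a + i%:Z) * l%:Z + j%:Z | i <- iota 0 (absz (b - a)%R)].
rewrite /count_range (@count_eq_size_mem _ _ _ r) ?size_map ?size_iota ?window_uniq //.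
  by rewrite map_inj_uniq ?iota_uniq // => i k /eqP; rewrite -subr_eq0; nia.
move=> z; rewrite mem_window; apply/idP/mapP => [/andP[zab /eqP zj]|[i]].
  have ab_l : a * l%:Z <= b * l%:Z by rewrite ler_pM2r.
  have : a <= (z %/ l%:Z)%Z by rewrite lez_divRL //; lia.
  have : (z %/ l%:Z)%Z < b by rewrite ltz_divLR //; lia.
  have := divz_eq z l%:Z.
  exists (absz ((z %/ l%:Z)%Z - a)%R); rewrite ?mem_iota; lia.
rewrite mem_iota => ilt ->; rewrite modzMDl modz_small; last by lia.
rewrite eqxx andbT; nia.
Qed.

Lemma part_default la p : (size la < p)%N -> part la p = 0%N.
Proof. by move=> lap; rewrite /part nth_default //; lia. Qed.

Lemma content_default la p : (size la < p)%N -> content la p = - p%:Z.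
Proof. by move=> lap; rewrite /content part_default // sub0r. Qed.

Lemma content_ge la p : - p%:Z <= content la p.
Proof. rewrite /content; lia. Qed.

Definition contents (la : seq nat) : seq int := [seq content la p | p <- iota 1 (size la)].

Lemma contentsP la z :
  reflect (exists2 p, (0 < p <= size la)%N & content la p = z) (z \in contents la).
Proof.
by apply: (iffP mapP) => [[p]|[p]]; rewrite ?mem_iota => pla zE; exists p; rewrite ?mem_iota; lia.
Qed.

(* Rows beyond [size la] are empty, so the beta-set contains every integer below [- size la]. *)
Definition in_beta (la : seq nat) (z : int) : bool :=
  (z < - (size la)%:Z) || (z \in contents la).

Lemma in_betaP la z : reflect (exists2 p, (0 < p)%N & content la p = z) (in_beta la z).
Proof.
apply: (iffP orP) => [[zlt|/contentsP[p /andP[p0 _] <-]]|[p p0 <-]].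
- by exists (absz (- z)%R); rewrite ?content_default; lia.
- by exists p.
case: (leqP p (size la)) => pla; last by left; rewrite content_default; lia.
by right; apply/contentsP; exists p; rewrite ?p0.
Qed.

Section Partition.
Variable la : seq nat.
Hypothesis la_part : is_partition la.

Lemma part_le p q : (0 < p <= q)%N -> (part la q <= part la p)%N.
Proof.
move=> /andP[p0 pq]; rewrite /part.
case: (ltnP q.-1 (size la)) => qla; last by rewrite nth_default.
apply: (sorted_leq_nth (rev_trans leq_trans) leqnn 0%N la_part.1); rewrite ?inE; lia.
Qed.

Lemma part_gt0 p : (0 < p <= size la)%N -> (0 < part la p)%N.
Proof.
by case: p => // p /andP[_ pla]; apply: (allP la_part.2); apply: mem_nth.
Qed.

Lemma content_le_sub p q : (0 < p <= q)%N -> content la q + (q - p)%N%:Z <= content la p.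
Proof. by move=> pq; have := part_le pq; rewrite /content; lia. Qed.

Lemma content_inj p q : (0 < p)%N -> (0 < q)%N -> content la p = content la q -> p = q.
Proof.
move=> p0 q0 pq; case: (ltngtP p q) => // lt.
  by have := @content_le_sub p q; lia.
by have := @content_le_sub q p; lia.
Qed.

Lemma content_gt p : (0 < p <= size la)%N -> - p%:Z < content la p.
Proof. by move=> pla; have := part_gt0 pla; rewrite /content; lia. Qed.

Lemma contents_uniq : uniq (contents la).
Proof.
rewrite map_inj_in_uniq ?iota_uniq // => p q.
by rewrite !mem_iota => pla qla; apply: content_inj; lia.
Qed.

Lemma in_beta_lt z : in_beta la z -> z < (part la 1)%:Z.
Proof. by move=> /in_betaP[p p0 <-]; have := @content_le_sub 1 p; rewrite /content; lia. Qed.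

Lemma count_range_beta A B :
  A <= - (size la)%:Z -> (part la 1)%:Z <= B ->
  count_range (in_beta la) A B = (absz (- (size la)%:Z - A)%R + size la)%N.
Proof.
move=> An pB; rewrite (@count_range_split _ _ (- (size la)%:Z)) //; last by lia.
rewrite count_range_all //; last by move=> y ?; rewrite /in_beta; apply/orP; left; lia.
congr (_ + _)%N; rewrite /count_range (@count_eq_size_mem _ _ _ (contents la)) ?window_uniq //.
- by rewrite size_map size_iota.
- exact: contents_uniq.
move=> z; rewrite mem_window; apply/idP/idP => [/andP[zn /orP[|//]]|zS]; first lia.
have zlt : z < (part la 1)%:Z by apply: in_beta_lt; rewrite // /in_beta zS orbT.
rewrite /in_beta zS orbT andbT.
by case/contentsP: zS => p pla zE; have := content_gt pla; lia.
Qed.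

End Partition.

Lemma hook_arm_leg la p q y : is_partition la -> (0 < p < q)%N ->
  (0 < y <= part la q.-1)%N -> (part la q < y)%N ->
  hook la p y = ((part la p - y).+1 + (q - p.+1))%N.
Proof.
move=> la_part /andP[p0 pq] /andP[y0 yq1] qy; rewrite /hook; congr (_ + _)%N.
rewrite (@count_eq_size_mem _ _ _ (iota p.+1 (q - p.+1))) ?size_iota ?iota_uniq // => x.
have q1la : (q.-1 <= size la)%N by case: leqP => // /part_default; lia.
have := @part_le _ la_part x q.-1; have := @part_le _ la_part q x.
rewrite !mem_iota; lia.
Qed.

Lemma content_crossing la p t : is_partition la -> (0 < p)%N ->
  t < content la p -> ~~ in_beta la t ->
  exists2 q, (p < q)%N & content la q < t < content la q.-1.
Proof.
move=> la_part p0 tp tS.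
have ex : exists q, (p < q)%N && (content la q < t).
  by exists (size la + p + absz t)%R.+1; rewrite content_default; lia.
case: (ex_minnP ex) => q /andP[pq qt] qmin; exists q; rewrite // qt lt_neqAle /=.
apply/andP; split.
  by apply: contraNneq tS => ->; apply/in_betaP; exists q.-1; rewrite //; lia.
case: (ltnP p q.-1) => [pq1|q1p]; last by rewrite (_ : q.-1 = p) ?ltW //; lia.
by rewrite leNgt; apply/negP => q1t; have := qmin q.-1; rewrite pq1 q1t; lia.
Qed.

Section Core.
Variables (l : nat) (la : seq nat).
Hypotheses (l_gt0 : (0 < l)%N) (la_part : is_partition la) (la_core : is_core l la).

Lemma in_beta_subl z : in_beta la z -> in_beta la (z - l%:Z).
Proof.
move=> /in_betaP[p p0 <-]; apply/idPn => tS.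
have tp : content la p - l%:Z < content la p by lia.
have [q pq /andP[qt tq1]] := content_crossing la_part p0 tp tS.
have [y yE] : exists y : nat, y%:Z = content la p - l%:Z + q%:Z.
  by exists (absz (content la p - l%:Z + q%:Z))%R; move: qt (content_ge la q); lia.
have /andP[y0 yq1] : (0 < y <= part la q.-1)%N.
  by move: tq1 (content_ge la q) qt; rewrite /content in yE *; lia.
have qy : (part la q < y)%N by move: qt; rewrite /content in yE *; lia.
have yp := @part_le _ la_part p q.-1.
have hook_l : hook la p y = l.
  by rewrite (@hook_arm_leg _ _ q) ?p0 ?pq ?y0 ?yq1 //; move: yp; rewrite /content in yE; lia.
have box : is_box la p y.
  rewrite /is_box p0 y0 /=; move: yp.
  by case: (leqP p (size la)) => [|/part_default]; lia.
by have := la_core box; rewrite hook_l dvdnn.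
Qed.

Lemma in_beta_subMl k z : in_beta la z -> in_beta la (z - (k * l)%N%:Z).
Proof.
move=> zS; elim: k => [|k IH]; first by rewrite mul0n subr0.
by rewrite (_ : _ - _ = z - (k * l)%N%:Z - l%:Z) ?in_beta_subl //; lia.
Qed.

Lemma in_beta_le_eqmod z w : in_beta la z -> w <= z ->
  (w %% l%:Z)%Z = (z %% l%:Z)%Z -> in_beta la w.
Proof.
move=> zS wz wzmod; have := divz_eq z l%:Z; have := divz_eq w l%:Z.
have : (w %/ l%:Z <= z %/ l%:Z)%Z by apply: lez_pdiv2r.
move=> wzq wE zE; rewrite (_ : w = z - (absz ((z %/ l%:Z)%Z - (w %/ l%:Z)%Z)%R * l)%N%:Z).
  exact: in_beta_subMl.
nia.
Qed.

End Core.

(* The largest integer below [- size la] congruent to [j] modulo [l]. *)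
Definition beta_base (l : nat) (la : seq nat) (j : nat) : int :=
  - (size la).+1%:Z - ((- (size la).+1%:Z - j%:Z) %% l%:Z)%Z.

Definition beta_max (l : nat) (la : seq nat) (j : nat) : int :=
  foldr Num.max (beta_base l la j) [seq z <- contents la | (z %% l%:Z)%Z == j%:Z].

Definition core_nvector (l : nat) (la : seq nat) (j : nat) : int :=
  (beta_max l la j %/ l%:Z)%Z + 1.

Section NVector.
Variables (l : nat) (la : seq nat).
Hypothesis l_gt0 : (0 < l)%N.

Lemma beta_baseP j : (j < l)%N -> [/\ beta_base l la j < - (size la)%:Z,
  - (size la)%:Z - l%:Z <= beta_base l la j & (beta_base l la j %% l%:Z)%Z = j%:Z].
Proof.
move=> jl; rewrite /beta_base; set u := - (size la).+1%:Z - j%:Z.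
have := modz_ge0 u (_ : l%:Z != 0); have := ltz_pmod u (_ : 0 < l%:Z).
split; try lia.
have -> : - (size la).+1%:Z - (u %% l%:Z)%Z = (u %/ l%:Z)%Z * l%:Z + j%:Z.
  by have := divz_eq u l%:Z; rewrite /u; lia.
by rewrite modzMDl modz_small //; lia.
Qed.

Lemma beta_max_mem j : (j < l)%N ->
  in_beta la (beta_max l la j) /\ (beta_max l la j %% l%:Z)%Z = j%:Z.
Proof.
move=> jl; have [base_lt _ base_mod] := beta_baseP jl.
have := foldr_max_mem (beta_base l la j) [seq z <- contents la | (z %% l%:Z)%Z == j%:Z].
rewrite -/(beta_max l la j) inE mem_filter => /orP[/eqP->|/andP[/eqP zj zS]].
  by rewrite /in_beta base_lt.
by rewrite /in_beta zS orbT.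
Qed.

Lemma beta_base_le_max j : beta_base l la j <= beta_max l la j.
Proof. by apply: foldr_max_ge; exact: mem_head. Qed.

Lemma beta_max_ge j z : (j < l)%N -> in_beta la z -> (z %% l%:Z)%Z = j%:Z ->
  z <= beta_max l la j.
Proof.
move=> jl /orP[zlt|zS] zj; last by apply: foldr_max_ge; rewrite inE mem_filter zS zj eqxx orbT.
have [_ base_ge base_mod] := beta_baseP jl.
by apply: le_trans (beta_base_le_max j); apply: (eqz_mod_le l_gt0); [rewrite zj base_mod | lia].
Qed.

Lemma is_nvector_core : is_nvector l la (core_nvector l la).
Proof.
move=> j jl; have [bS bj] := beta_max_mem jl; split.
  by have [p p0 pE] := in_betaP _ _ bS; exists p; rewrite /region /core_nvector pE bj.
move=> p p0 pj; rewrite /region /core_nvector lerD2r lez_pdiv2r //.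
by apply: beta_max_ge => //; apply/in_betaP; exists p.
Qed.

End NVector.

Section GapCount.
Variables (l : nat) (b : nat -> int).
Hypothesis l_gt0 : (0 < l)%N.

Lemma lowX_inX y : y < lowX l b -> inX l b y.
Proof.
move=> ylow; have [rE rl] := modz_absz y l_gt0; rewrite /inX.
have : minb l b <= b `|(y %% l%:Z)%Z|%N.
  by apply: foldr_min_le; rewrite inE map_f ?orbT // mem_iota add0n rl.
have : (y %/ l%:Z)%Z * l%:Z <= y by rewrite lez_floor //; lia.
move: ylow; rewrite /lowX; nia.
Qed.

Lemma inX_lt_highX x : inX l b x -> x < highX l b.
Proof.
rewrite /inX => xq; have [rE rl] := modz_absz x l_gt0.
have : b `|(x %% l%:Z)%Z|%N <= maxb l b.
  by apply: foldr_max_ge; rewrite inE map_f ?orbT // mem_iota add0n rl.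
have := ltz_ceil x (_ : 0 < l%:Z); rewrite /highX; nia.
Qed.

Lemma gapcountE L x : (forall y, y < L -> inX l b y) -> L <= x ->
  gapcount l b x = count_range (predC (inX l b)) L x.
Proof.
move=> belowL Lx.
have notX A B : A <= B -> (forall y, y < B -> inX l b y) ->
    count_range (predC (inX l b)) A B = 0%N.
  by move=> AB inB; apply: count_range_eq0 => // y /andP[_ /inB yX]; rewrite /= yX.
rewrite /gapcount; case: ifP => [lowx|/negbT]; last first.
  by rewrite -ltNge => xlow; rewrite notX // => y yx; apply: lowX_inX; lia.
rewrite -(count_map (fun i : nat => lowX l b + i%:Z) (predC (inX l b))).
rewrite -/(window _ _) -/(count_range (predC (inX l b)) _ x).
case: (leP L (lowX l b)) => [Llow|lowL].
  by rewrite (count_range_split _ Llow lowx) (notX L) //; apply: lowX_inX.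
by rewrite (count_range_split _ (ltW lowL) Lx) notX //; apply: ltW.
Qed.

Lemma gapcount_gt0_lowX x : (0 < gapcount l b x)%N -> lowX l b <= x.
Proof. by rewrite /gapcount; case: ifP. Qed.

End GapCount.

Section CoreNVector.
Variables (l : nat) (la : seq nat).
Hypotheses (l_gt0 : (0 < l)%N) (la_part : is_partition la) (la_core : is_core l la).

Local Notation b := (core_nvector l la).

Lemma inX_core_nvector x : inX l b x = in_beta la (x - l%:Z).
Proof.
have [rE rl] := modz_absz x l_gt0; rewrite /inX /core_nvector.
have [bS bmod] := beta_max_mem la l_gt0 rl.
have xlE : x - l%:Z = -1 * l%:Z + x by lia.
have xlmod : ((x - l%:Z) %% l%:Z)%Z = `|(x %% l%:Z)%Z|%N%:Z by rewrite rE xlE modzMDl.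
have xlq : ((x - l%:Z) %/ l%:Z)%Z = (x %/ l%:Z)%Z - 1.
  by rewrite xlE divzMDl; lia.
rewrite -lerBlDr -xlq -(lez_eqmod_div l_gt0); last by rewrite xlmod bmod.
apply/idP/idP => [xle|xS]; last exact: beta_max_ge.
by apply: (in_beta_le_eqmod l_gt0 la_part la_core bS xle); rewrite xlmod bmod.
Qed.

Lemma core_nvector_bounds j : (j < l)%N -> - (size la).+1%:Z <= b j <= (part la 1).+1%:Z.
Proof.
move=> jl; have [bS _] := beta_max_mem la l_gt0 jl.
have [_ base_ge _] := beta_baseP la l_gt0 jl.
have := beta_base_le_max l la j; have := in_beta_lt la_part bS.
have l0 : 0 < l%:Z by lia.
move=> bmax_lt base_le; rewrite /core_nvector.
have : - (size la).+2%:Z <= (beta_max l la j %/ l%:Z)%Z by rewrite lez_divRL //; nia.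
have : (beta_max l la j %/ l%:Z)%Z < (part la 1).+1%:Z by rewrite ltz_divLR //; nia.
lia.
Qed.

Lemma count_range_beta_residue j (a c : int) : (j < l)%N -> a <= b j <= c ->
  count_range (fun z => in_beta la z && ((z %% l%:Z)%Z == j%:Z)) (a * l%:Z) (c * l%:Z)
  = absz (b j - a)%R.
Proof.
move=> jl /andP[ab bc]; have [bS bmod] := beta_max_mem la l_gt0 jl.
have l0 : 0 < l%:Z by lia.
rewrite (@count_range_split _ _ (b j * l%:Z)) ?ler_pM2r //.
rewrite [X in (_ + X)%N]count_range_eq0 ?ler_pM2r // ?addn0; last first.
  move=> z /andP[zb _]; apply/negP => /andP[zS /eqP zj].
  have := beta_max_ge l_gt0 jl zS zj; have := ltz_ceil (beta_max l la j) l0.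
  by move: zb; rewrite /core_nvector; lia.
rewrite -(count_residue_range jl ab) /count_range; apply: eq_in_count => z.
rewrite mem_window => /andP[_ zlt]; case: eqP => [zj|_]; rewrite ?andbT ?andbF //.
apply: (in_beta_le_eqmod l_gt0 la_part la_core bS); last by rewrite zj bmod.
rewrite (lez_eqmod_div l_gt0) ?zj ?bmod //.
have abl : a * l%:Z <= b j * l%:Z by rewrite ler_pM2r.
have : (z %/ l%:Z)%Z < b j by rewrite ltz_divLR //; lia.
by rewrite /core_nvector; lia.
Qed.

Lemma sum_core_nvector : \sum_(j < l) b j = 0.
Proof.
pose a : int := - (size la).+1%:Z; pose c : int := (part la 1).+1%:Z.
have l0 : 0 < l%:Z by lia.
have sum_nat : (\sum_(j < l) absz (b j - a)%R)%N
    = (absz (- (size la)%:Z - a * l%:Z)%R + size la)%N.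
  rewrite -(@count_range_beta _ la_part _ (c * l%:Z)) //; try by rewrite /a /c; nia.
  rewrite /count_range (@count_by_residue l _ _ l_gt0); apply: eq_bigr => j _.
  by apply: esym; apply: count_range_beta_residue => //; apply: core_nvector_bounds.
have := congr1 Posz sum_nat; rewrite (big_morph Posz PoszD (erefl (Posz 0))).
rewrite (eq_bigr (fun j : 'I_l => b j - a)); last first.
  by move=> j _; have := core_nvector_bounds (ltn_ord j); rewrite /a; lia.
have : (size la)%:Z <= (size la).+1%:Z * l%:Z by nia.
rewrite sumrB sumr_const card_ord -mulr_natr natz /a !mulNr.
by move: (\sum_(j < l) b j) => S; lia.
Qed.

Lemma count_range_notin_beta p : (0 < p <= size la)%N ->
  count_range (predC (in_beta la)) (- (size la)%:Z) (content la p) = part la p.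
Proof.
move=> pla; have cp := content_gt la_part pla.
rewrite /count_range; set w := window _ _; have := count_predC (in_beta la) w.
rewrite (@count_eq_size_mem _ _ _ [seq content la q | q <- iota p.+1 (size la - p)]).
- rewrite /w !size_map !size_iota /content in cp *.
  by move: (count _ _) => C; lia.
- exact: window_uniq.
- rewrite map_inj_in_uniq ?iota_uniq // => q q'; rewrite !mem_iota => qla q'la.
  by apply: (content_inj la_part); lia.
move=> z; rewrite /w mem_window; apply/idP/mapP => [|[q]].
  case/andP=> zw /orP[zlt|/contentsP[q qla zE]]; first lia.
  exists q; rewrite // mem_iota.
  by case: (leqP q p) => qp; [have := @content_le_sub _ la_part q p | ]; lia.
rewrite mem_iota => qla ->; have q_gt := @content_gt _ la_part q.
have := @content_le_sub _ la_part p q.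
rewrite (_ : in_beta _ _); first lia.
by apply/in_betaP; exists q => //; lia.
Qed.

Lemma gapcount_content p : (0 < p <= size la)%N ->
  gapcount l b (content la p + l%:Z) = part la p.
Proof.
move=> pla; have cp := content_gt la_part pla.
rewrite (@gapcountE _ _ l_gt0 (l%:Z - (size la)%:Z)); first last.
- lia.
- by move=> y yl; rewrite inX_core_nvector /in_beta; apply/orP; left; lia.
rewrite (count_range_shift _ _ _ l%:Z) -(count_range_notin_beta pla) /count_range.
rewrite addrK (_ : l%:Z - (size la)%:Z - l%:Z = - (size la)%:Z); last by lia.
by apply: eq_count => y /=; rewrite inX_core_nvector addrK.
Qed.

Lemma gapcount_low x : x - l%:Z < - (size la)%:Z -> gapcount l b x = 0%N.
Proof.
move=> xlow; rewrite (@gapcountE _ _ l_gt0 x) //; first by rewrite /count_range subrr.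
by move=> y yx; rewrite inX_core_nvector /in_beta; apply/orP; left; lia.
Qed.

Lemma pi_core_nvector : pi_l l b = la.
Proof.
rewrite /pi_l; set xs := [seq x <- _ | _].
have xs_perm : perm_eq xs [seq content la p + l%:Z | p <- iota 1 (size la)].
  apply: uniq_perm.
  - by rewrite filter_uniq //; apply: window_uniq.
  - rewrite map_inj_in_uniq ?iota_uniq // => p q; rewrite !mem_iota => pla qla /addIr.
    by apply: (content_inj la_part); lia.
  move=> x; rewrite mem_filter -/(window _ _) mem_window; apply/idP/mapP => [|[p]].
    case/andP => /andP[]; rewrite inX_core_nvector => /orP[xlow|/contentsP[p pla pE]].
      by rewrite gapcount_low.
    by move=> _ _; exists p; rewrite ?mem_iota -?pE ?subrK //; lia.
  rewrite mem_iota => pla ->; have pla' : (0 < p <= size la)%N by lia.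
  have gap_gt0 : (0 < gapcount l b (content la p + l%:Z))%N.
    by rewrite gapcount_content ?part_gt0.
  have xX : inX l b (content la p + l%:Z).
    by rewrite inX_core_nvector addrK; apply/in_betaP; exists p; rewrite //; lia.
  rewrite xX gap_gt0 gapcount_gt0_lowX //=.
  by have := inX_lt_highX l_gt0 xX; lia.
have gaps : [seq gapcount l b x | x <- [seq content la p + l%:Z | p <- iota 1 (size la)]] = la.
  rewrite -map_comp (_ : map _ _ = [seq part la p | p <- iota 1 (size la)]).
    rewrite (_ : iota 1 _ = [seq i.+1 | i <- iota 0 (size la)]); last by rewrite -(iotaDl 1).
    by rewrite -map_comp; apply: mkseq_nth.
  by apply/eq_in_map => p; rewrite mem_iota => pla /=; apply: gapcount_content; lia.
rewrite -[RHS](sorted_sort (rev_trans leq_trans) la_part.1); apply/perm_sortP.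
- by move=> m n; apply: leq_total.
- exact: rev_trans leq_trans.
- by move=> m n /andP[mn nm]; apply/anti_leq/andP.
by rewrite -[X in perm_eq _ X]gaps; apply: perm_map.
Qed.

End CoreNVector.

Theorem mainTheorem6 (l : nat) (la : seq nat) :
  (2 <= l)%N -> is_partition la -> is_core l la ->
  exists b : nat -> int,
    is_nvector l la b /\ \sum_(j < l) b j = 0 /\ pi_l l b = la.
Proof.
move=> l2 la_part la_core; have l_gt0 : (0 < l)%N by lia.
exists (core_nvector l la); split; first exact: is_nvector_core.
by split; [apply: sum_core_nvector | apply: pi_core_nvector].
Qed.
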